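(* Let $\Gamma$ be a finite multiset of formulas and $G$ a formula such that the sequent $G\supset\bot,\Gamma\longrightarrow G$ has an $\mathbf{I}$-proof in which no $\forall$-L and no $\supset$-R rules are used. Then there is an $\mathbf{I}_G$-proof of $\Gamma\longrightarrow G$ in which no $\forall$-L and no $\supset$-R rules are used.
   Context: Formulas are first-order formulas built from atomic formulas and the logical constants $\top$, $\bot$ (not counted as atomic) using $\land,\lor,\supset,\forall,\exists$; $B[t/x]$ is capture-avoiding substitution of term $t$ for free $x$ in $B$. A sequent $\Gamma\longrightarrow\Delta$ is a pair of finite multisets of formulas; $B,\Gamma$ denotes $\Gamma$ with an extra occurrence of $B$. A sequent is an axiom if $\top\in\Delta$ or some formula that is $\bot$ or atomic occurs in both $\Gamma$ and $\Delta$. Writing premises $\Rightarrow$ conclusion, the rules are all instances of: contr-L: $B,B,\Gamma\longrightarrow\Delta\Rightarrow B,\Gamma\longrightarrow\Delta$; contr-R: $\Gamma\longrightarrow\Delta,B,B\Rightarrow\Gamma\longrightarrow\Delta,B$; $\bot$-R: $\Gamma\longrightarrow\Delta,\bot\Rightarrow\Gamma\longrightarrow\Delta,D$; $\land$-L: $B,\Gamma\longrightarrow\Delta\Rightarrow B\land D,\Gamma\longrightarrow\Delta$ and $D,\Gamma\longrightarrow\Delta\Rightarrow B\land D,\Gamma\longrightarrow\Delta$; $\lor$-L: $B,\Gamma\longrightarrow\Delta$ and $D,\Gamma\longrightarrow\Delta\Rightarrow B\lor D,\Gamma\longrightarrow\Delta$; $\land$-R: $\Gamma\longrightarrow\Delta,B$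 and $\Gamma\longrightarrow\Delta,D\Rightarrow\Gamma\longrightarrow\Delta,B\land D$; $\lor$-R: $\Gamma\longrightarrow\Delta,B\Rightarrow\Gamma\longrightarrow\Delta,B\lor D$ and $\Gamma\longrightarrow\Delta,D\Rightarrow\Gamma\longrightarrow\Delta,B\lor D$; $\supset$-L: $\Gamma\longrightarrow\Delta,B$ and $D,\Gamma\longrightarrow\Theta\Rightarrow B\supset D,\Gamma\longrightarrow\Delta,\Theta$; $\supset$-R: $B,\Gamma\longrightarrow\Delta,D\Rightarrow\Gamma\longrightarrow\Delta,B\supset D$; $\forall$-L: $B[t/x],\Gamma\longrightarrow\Delta\Rightarrow\forall x B,\Gamma\longrightarrow\Delta$; $\exists$-R: $\Gamma\longrightarrow\Delta,B[t/x]\Rightarrow\Gamma\longrightarrow\Delta,\exists x B$ ($t$ any term); $\exists$-L: $B[c/x],\Gamma\longrightarrow\Delta\Rightarrow\exists x B,\Gamma\longrightarrow\Delta$; $\forall$-R: $\Gamma\longrightarrow\Delta,B[c/x]\Rightarrow\Gamma\longrightarrow\Delta,\forall x B$, where the constant $c$ does not occur in the conclusion. A $\mathbf{C}$-proof is a finite tree of sequents with axioms at the leaves, each internal node being the conclusion of a rule instance whose premises are its children. An $\mathbf{I}$-proof is a $\mathbf{C}$-proof in which every sequent has exactly one formula in its succedent. For a fixed formula $G$, an $\mathbf{I}_G$-proof is a derivation, all of whose sequents have exactly one succedent formula and whose leaves are axioms, built with the rules available for $\mathbf{I}$-proofs except that: the $\lor$-L rule is removed; the constant $c$ in $\exists$-L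 and $\forall$-R must additionally not occur in $G$; and the following two rules are added ($F$ any formula, $\Delta$ any multiset): $\lor$-L$_G$: $B,\Delta\longrightarrow F$ and $D,\Delta\longrightarrow G\ \Rightarrow\ B\lor D,\Delta\longrightarrow F$; res$_G$: $\Delta\longrightarrow G\ \Rightarrow\ \Delta\longrightarrow F$. A rule ''is used'' if some instance of that schema occurs in the proof. *)

From Stdlib Require Import List Permutation Arith.
Import ListNotations.

(* First-order terms.  Variables are de Bruijn indices (so substitution is
   automatically capture-avoiding); constants (used as eigenvariables) and
   function symbols are named by nat. *)
Inductive term : Type :=
| TVar : nat -> term
| TConst : nat -> term
| TFun : nat -> list term -> term.

(* Formulas: atoms, the logical constants top / bot (not atomic),
   and the connectives and quantifiers.  [All B] / [Ex B] bind index 0 in B. *)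
Inductive formula : Type :=
| Atom : nat -> list term -> formula
| Top : formula
| Bot : formula
| And : formula -> formula -> formula
| Or : formula -> formula -> formula
| Imp : formula -> formula -> formula
| All : formula -> formula
| Ex : formula -> formula.

Fixpoint tlift (d c : nat) (t : term) : term :=
  match t with
  | TVar n => if c <=? n then TVar (n + d) else TVar n
  | TConst k => TConst k
  | TFun f l => TFun f (map (tlift d c) l)
  end.

(* substitute t (a term living at depth 0) for variable k at depth k,
   decrementing the variables above k *)
Fixpoint tsubst (k : nat) (t : term) (s : term) : term :=
  match s with
  | TVar n => if n =? k then tlift k 0 t
              else if k <? n then TVar (n - 1) else TVar n
  | TConst c => TConst c
  | TFun f l => TFun f (map (tsubst k t) l)
  end.

Fixpoint fsubst (k : nat) (t : term) (B : formula) : formula :=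
  match B with
  | Atom p l => Atom p (map (tsubst k t) l)
  | Top => Top
  | Bot => Bot
  | And B1 B2 => And (fsubst k t B1) (fsubst k t B2)
  | Or B1 B2 => Or (fsubst k t B1) (fsubst k t B2)
  | Imp B1 B2 => Imp (fsubst k t B1) (fsubst k t B2)
  | All B1 => All (fsubst (S k) t B1)
  | Ex B1 => Ex (fsubst (S k) t B1)
  end.

Definition inst (B : formula) (t : term) : formula := fsubst 0 t B.

Fixpoint occurs_t (c : nat) (t : term) : Prop :=
  match t with
  | TVar _ => False
  | TConst k => k = c
  | TFun _ l => fold_right (fun s P => occurs_t c s \/ P) False l
  end.

Fixpoint occurs (c : nat) (B : formula) : Prop :=
  match B with
  | Atom _ l => exists t, In t l /\ occurs_t c t
  | Top | Bot => False
  | And B1 B2 | Or B1 B2 | Imp B1 B2 => occurs c B1 \/ occurs c B2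
  | All B1 | Ex B1 => occurs c B1
  end.

Definition occurs_list (c : nat) (L : list formula) : Prop :=
  exists B, In B L /\ occurs c B.

Definition atomic (B : formula) : Prop :=
  match B with Atom _ _ => True | _ => False end.

Definition axiom (Gam Del : list formula) : Prop :=
  In Top Del \/ exists B, (B = Bot \/ atomic B) /\ In B Gam /\ In B Del.

Inductive rule : Type :=
| RcontrL | RcontrR | RbotR | RandL | RorL | RandR | RorR
| RimpL | RimpR | RallL | RexR | RexL | RallR
| RorLG | RresG.

(* Sequents are pairs of multisets, represented by lists taken up to
   permutation (every rule's conclusion is any permutation of the displayed
   form). *)
Inductive Cder (P : list formula -> list formula -> Prop) (A : rule -> Prop)
  : list formula -> list formula -> Prop :=
| C_ax Gam Del : P Gam Del -> axiom Gam Del -> Cder P A Gam Del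
| C_contrL Gc Del B Gam : P Gc Del -> A RcontrL -> Permutation Gc (B :: Gam) ->
    Cder P A (B :: B :: Gam) Del -> Cder P A Gc Del
| C_contrR Gam Dc B Del : P Gam Dc -> A RcontrR -> Permutation Dc (B :: Del) ->
    Cder P A Gam (B :: B :: Del) -> Cder P A Gam Dc
| C_botR Gam Dc D Del : P Gam Dc -> A RbotR -> Permutation Dc (D :: Del) ->
    Cder P A Gam (Bot :: Del) -> Cder P A Gam Dc
| C_andL1 Gc Del B D Gam : P Gc Del -> A RandL -> Permutation Gc (And B D :: Gam) ->
    Cder P A (B :: Gam) Del -> Cder P A Gc Del
| C_andL2 Gc Del B D Gam : P Gc Del -> A RandL -> Permutation Gc (And B D :: Gam) ->
    Cder P A (D :: Gam) Del -> Cder P A Gc Del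
| C_orL Gc Del B D Gam : P Gc Del -> A RorL -> Permutation Gc (Or B D :: Gam) ->
    Cder P A (B :: Gam) Del -> Cder P A (D :: Gam) Del -> Cder P A Gc Del
| C_andR Gam Dc B D Del : P Gam Dc -> A RandR -> Permutation Dc (And B D :: Del) ->
    Cder P A Gam (B :: Del) -> Cder P A Gam (D :: Del) -> Cder P A Gam Dc
| C_orR1 Gam Dc B D Del : P Gam Dc -> A RorR -> Permutation Dc (Or B D :: Del) ->
    Cder P A Gam (B :: Del) -> Cder P A Gam Dc
| C_orR2 Gam Dc B D Del : P Gam Dc -> A RorR -> Permutation Dc (Or B D :: Del) ->
    Cder P A Gam (D :: Del) -> Cder P A Gam Dc
| C_impL Gc Dc B D Gam Del The : P Gc Dc -> A RimpL ->
    Permutation Gc (Imp B D :: Gam) -> Permutation Dc (Del ++ The) ->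
    Cder P A Gam (B :: Del) -> Cder P A (D :: Gam) The -> Cder P A Gc Dc
| C_impR Gam Dc B D Del : P Gam Dc -> A RimpR -> Permutation Dc (Imp B D :: Del) ->
    Cder P A (B :: Gam) (D :: Del) -> Cder P A Gam Dc
| C_allL Gc Del B t Gam : P Gc Del -> A RallL -> Permutation Gc (All B :: Gam) ->
    Cder P A (inst B t :: Gam) Del -> Cder P A Gc Del
| C_exR Gam Dc B t Del : P Gam Dc -> A RexR -> Permutation Dc (Ex B :: Del) ->
    Cder P A Gam (inst B t :: Del) -> Cder P A Gam Dc
| C_exL Gc Del B c Gam : P Gc Del -> A RexL -> Permutation Gc (Ex B :: Gam) ->
    ~ occurs_list c Gc -> ~ occurs_list c Del ->
    Cder P A (inst B (TConst c) :: Gam) Del -> Cder P A Gc Del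
| C_allR Gam Dc B c Del : P Gam Dc -> A RallR -> Permutation Dc (All B :: Del) ->
    ~ occurs_list c Gam -> ~ occurs_list c Dc ->
    Cder P A Gam (inst B (TConst c) :: Del) -> Cder P A Gam Dc.

Definition single_succ (Gam Del : list formula) : Prop := length Del = 1.

Definition Iproof (A : rule -> Prop) (Gam : list formula) (F : formula) : Prop :=
  Cder single_succ A Gam [F].

(* I_G-proofs (single-succedent, written Gam --> F): the I-rules without or-L,
   with the extra freshness condition w.r.t. G, plus or-L_G and res_G.
   (contr-R has no single-succedent instance, so it is absent.) *)
Inductive IGder (G : formula) (A : rule -> Prop) : list formula -> formula -> Prop :=
| G_ax Gam F : axiom Gam [F] -> IGder G A Gam F
| G_contrL Gc F B Gam : A RcontrL -> Permutation Gc (B :: Gam) ->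
    IGder G A (B :: B :: Gam) F -> IGder G A Gc F
| G_botR Gam F : A RbotR -> IGder G A Gam Bot -> IGder G A Gam F
| G_andL1 Gc F B D Gam : A RandL -> Permutation Gc (And B D :: Gam) ->
    IGder G A (B :: Gam) F -> IGder G A Gc F
| G_andL2 Gc F B D Gam : A RandL -> Permutation Gc (And B D :: Gam) ->
    IGder G A (D :: Gam) F -> IGder G A Gc F
| G_andR Gam B D : A RandR -> IGder G A Gam B -> IGder G A Gam D ->
    IGder G A Gam (And B D)
| G_orR1 Gam B D : A RorR -> IGder G A Gam B -> IGder G A Gam (Or B D)
| G_orR2 Gam B D : A RorR -> IGder G A Gam D -> IGder G A Gam (Or B D)
| G_impL Gc F B D Gam : A RimpL -> Permutation Gc (Imp B D :: Gam) ->
    IGder G A Gam B -> IGder G A (D :: Gam) F -> IGder G A Gc F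
| G_impR Gam B D : A RimpR -> IGder G A (B :: Gam) D -> IGder G A Gam (Imp B D)
| G_allL Gc F B t Gam : A RallL -> Permutation Gc (All B :: Gam) ->
    IGder G A (inst B t :: Gam) F -> IGder G A Gc F
| G_exR Gam B t : A RexR -> IGder G A Gam (inst B t) -> IGder G A Gam (Ex B)
| G_exL Gc F B c Gam : A RexL -> Permutation Gc (Ex B :: Gam) ->
    ~ occurs_list c Gc -> ~ occurs c F -> ~ occurs c G ->
    IGder G A (inst B (TConst c) :: Gam) F -> IGder G A Gc F
| G_allR Gam B c : A RallR ->
    ~ occurs_list c Gam -> ~ occurs c (All B) -> ~ occurs c G ->
    IGder G A Gam (inst B (TConst c)) -> IGder G A Gam (All B)
| G_orLG Gc F B D Del : A RorLG -> Permutation Gc (Or B D :: Del) ->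
    IGder G A (B :: Del) F -> IGder G A (D :: Del) G -> IGder G A Gc F
| G_resG Del F : A RresG -> IGder G A Del G -> IGder G A Del F.

Definition no_allL_impR (r : rule) : Prop := r <> RallL /\ r <> RimpR.

From Stdlib Require Import List Permutation Arith Lia.
Import ListNotations.

(* Translate the I-proof of G ⊃ ⊥, Γ ⟶ G rule by rule, from the end-sequent
   upward.  G ⊃ ⊥ is dropped: an ⊃-L on it has a left premise ending in G and
   becomes res_G.  An ∨-L becomes ∨-L_G, whose right premise must end in G
   instead of the current succedent F; to get it, each subproof is translated
   together with a continuation, built from the part of the proof below it,
   that turns a proof of F in any larger context into a proof of G.  Principal
   formulas are kept (via contr-L), so translated contexts only grow upward;
   ⊃-R would break this, as it discharges a hypothesis.  I_G admits weakening,
   since axioms have arbitrary contexts and eigenvariables can be renamed.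
   Eigenvariables of the I-proof are renamed on the fly to constants fresh for
   G, for the context, and for the ∀-R eigenvariables below, which the
   continuations reintroduce. *)

Definition term_ind_nested (P : term -> Prop)
  (Hvar : forall n, P (TVar n)) (Hconst : forall k, P (TConst k))
  (Hfun : forall f l, Forall P l -> P (TFun f l)) : forall t, P t :=
  fix F t := match t with
  | TVar n => Hvar n
  | TConst k => Hconst k
  | TFun f l => Hfun f l ((fix go l := match l return Forall P l with
                             | [] => Forall_nil _
                             | u :: r => Forall_cons _ (F u) (go r)
                             end) l)
  end.

Lemma occurs_t_fun c f l : occurs_t c (TFun f l) <-> exists u, In u l /\ occurs_t c u.
Proof.
  simpl; induction l as [|u l IH]; simpl.
  - split; [tauto | intros (? & [] & _)].
  - rewrite IH; split.
    + intros [Hu | (v & Hv & Hc)]; eauto.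
    + intros (v & [<- | Hv] & Hc); eauto.
Qed.

Fixpoint rename_term (s : nat -> nat) (t : term) : term :=
  match t with
  | TVar n => TVar n
  | TConst k => TConst (s k)
  | TFun f l => TFun f (map (rename_term s) l)
  end.

Fixpoint rename (s : nat -> nat) (B : formula) : formula :=
  match B with
  | Atom p l => Atom p (map (rename_term s) l)
  | Top => Top
  | Bot => Bot
  | And B1 B2 => And (rename s B1) (rename s B2)
  | Or B1 B2 => Or (rename s B1) (rename s B2)
  | Imp B1 B2 => Imp (rename s B1) (rename s B2)
  | All B1 => All (rename s B1)
  | Ex B1 => Ex (rename s B1)
  end.

Lemma rename_term_tlift s d k t : rename_term s (tlift d k t) = tlift d k (rename_term s t).
Proof.
  induction t as [n | c | f l IH] using term_ind_nested; simpl; auto.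
  - destruct (k <=? n); reflexivity.
  - f_equal; rewrite !map_map; apply map_ext_Forall; exact IH.
Qed.

Lemma rename_term_tsubst s k t u :
  rename_term s (tsubst k t u) = tsubst k (rename_term s t) (rename_term s u).
Proof.
  induction u as [n | c | f l IH] using term_ind_nested; simpl; auto.
  - destruct (n =? k); [apply rename_term_tlift | destruct (k <? n); reflexivity].
  - f_equal; rewrite !map_map; apply map_ext_Forall; exact IH.
Qed.

Lemma rename_fsubst s B : forall k t,
  rename s (fsubst k t B) = fsubst k (rename_term s t) (rename s B).
Proof.
  induction B; intros; simpl; f_equal; auto.
  rewrite !map_map; apply map_ext; intros; apply rename_term_tsubst.
Qed.

Lemma rename_inst s B t : rename s (inst B t) = inst (rename s B) (rename_term s t).
Proof. apply rename_fsubst. Qed.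

Lemma rename_term_ext s s' t :
  (forall c, occurs_t c t -> s c = s' c) -> rename_term s t = rename_term s' t.
Proof.
  induction t as [n | c | f l IH] using term_ind_nested; simpl; intros Hss'; auto.
  f_equal; apply map_ext_in; intros u Hu.
  apply (proj1 (Forall_forall _ l) IH u Hu); intros c Hc.
  apply Hss', occurs_t_fun; eauto.
Qed.

Lemma rename_ext s s' B : (forall c, occurs c B -> s c = s' c) -> rename s B = rename s' B.
Proof.
  induction B; simpl; intros Hss'; f_equal; auto.
  apply map_ext_in; intros u Hu; apply rename_term_ext; eauto.
Qed.

Lemma rename_id B : rename (fun c => c) B = B.
Proof.
  assert (Hterm : forall t, rename_term (fun c => c) t = t).
  { induction t as [n | c | f l IH] using term_ind_nested; simpl; auto.
    f_equal; rewrite <- map_id; apply map_ext_Forall; exact IH. }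
  induction B; simpl; f_equal; auto.
  rewrite <- map_id; apply map_ext; exact Hterm.
Qed.

Lemma occurs_t_tlift c d k t : occurs_t c (tlift d k t) -> occurs_t c t.
Proof.
  induction t as [n | c' | f l IH] using term_ind_nested.
  - simpl; destruct (k <=? n); simpl; tauto.
  - simpl; auto.
  - cbn [tlift]; rewrite !occurs_t_fun; intros (u & Hu & Hc).
    apply in_map_iff in Hu as (v & <- & Hv).
    exists v; split; [exact Hv | exact (proj1 (Forall_forall _ l) IH v Hv Hc)].
Qed.

Lemma occurs_t_tsubst c k t u : occurs_t c (tsubst k t u) -> occurs_t c u \/ occurs_t c t.
Proof.
  induction u as [n | c' | f l IH] using term_ind_nested.
  - simpl; destruct (n =? k); [eauto using occurs_t_tlift | destruct (k <? n); simpl; tauto].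
  - simpl; auto.
  - cbn [tsubst]; rewrite !occurs_t_fun; intros (v & Hv & Hc).
    apply in_map_iff in Hv as (w & <- & Hw).
    destruct (proj1 (Forall_forall _ l) IH w Hw Hc); eauto.
Qed.

Lemma occurs_fsubst c B : forall k t, occurs c (fsubst k t B) -> occurs c B \/ occurs_t c t.
Proof.
  induction B; simpl; intros k t Hc; eauto;
    try (destruct Hc as [Hc | Hc]; [apply IHB1 in Hc | apply IHB2 in Hc]; tauto).
  destruct Hc as (u & Hu & Hc); apply in_map_iff in Hu as (v & <- & Hv).
  destruct (occurs_t_tsubst _ _ _ _ Hc); eauto.
Qed.

Fixpoint const_bound_term (t : term) : nat :=
  match t with
  | TVar _ => 0
  | TConst k => S k
  | TFun _ l => list_sum (map const_bound_term l)
  end.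

Fixpoint const_bound (B : formula) : nat :=
  match B with
  | Atom _ l => list_sum (map const_bound_term l)
  | Top | Bot => 0
  | And B1 B2 | Or B1 B2 | Imp B1 B2 => const_bound B1 + const_bound B2
  | All B1 | Ex B1 => const_bound B1
  end.

Lemma In_le_list_sum n l : In n l -> n <= list_sum l.
Proof.
  induction l as [|m l IH]; simpl; [tauto |].
  intros [-> | Hn]; [| specialize (IH Hn)]; lia.
Qed.

Lemma occurs_t_lt_bound c t : occurs_t c t -> c < const_bound_term t.
Proof.
  induction t as [n | k | f l IH] using term_ind_nested; [simpl; tauto | simpl; lia |].
  rewrite occurs_t_fun; intros (u & Hu & Hc).
  pose proof (In_le_list_sum _ _ (in_map const_bound_term _ _ Hu)).
  pose proof (proj1 (Forall_forall _ l) IH u Hu Hc); simpl; lia.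
Qed.

Lemma occurs_lt_bound c B : occurs c B -> c < const_bound B.
Proof.
  induction B; simpl; try tauto; try (intros [Hc | Hc]; [apply IHB1 in Hc | apply IHB2 in Hc]; lia).
  intros (u & Hu & Hc); apply occurs_t_lt_bound in Hc.
  pose proof (In_le_list_sum _ _ (in_map const_bound_term _ _ Hu)); lia.
Qed.

Lemma exists_fresh_const (A B : formula) (L : list formula) (X : list nat) :
  exists c, ~ occurs c A /\ ~ occurs c B /\ ~ occurs_list c L /\ ~ In c X.
Proof.
  remember (S (list_sum (map const_bound (A :: B :: L)) + list_sum X)) as c eqn:Hc.
  assert (HL : forall C, In C (A :: B :: L) -> ~ occurs c C).
  { intros C HC HcC; apply occurs_lt_bound in HcC.
    pose proof (In_le_list_sum _ _ (in_map const_bound _ _ HC)); lia. }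
  exists c; repeat split; [apply HL; simpl; auto | apply HL; simpl; auto | |].
  - intros (C & HC & HcC); apply (HL C); simpl; auto.
  - intros HcX; apply In_le_list_sum in HcX; lia.
Qed.

Definition update (s : nat -> nat) (c c' : nat) : nat -> nat :=
  fun x => if Nat.eq_dec x c then c' else s x.

Lemma rename_update_notin s c c' B : ~ occurs c B -> rename (update s c c') B = rename s B.
Proof.
  intros Hc; apply rename_ext; intros x Hx; unfold update.
  destruct (Nat.eq_dec x c) as [-> | _]; [contradiction | reflexivity].
Qed.

Lemma rename_update_inst s c c' B : ~ occurs c B ->
  rename (update s c c') (inst B (TConst c)) = inst (rename s B) (TConst c').
Proof.
  intros Hc; rewrite rename_inst, rename_update_notin by exact Hc; simpl; unfold update.
  destruct (Nat.eq_dec c c); [reflexivity | contradiction].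
Qed.

Lemma rename_atomic s B : atomic B -> atomic (rename s B).
Proof. destruct B; simpl; tauto. Qed.

Lemma not_occurs_list_In {c L B} : ~ occurs_list c L -> In B L -> ~ occurs c B.
Proof. intros Hc HB HcB; apply Hc; exists B; auto. Qed.

Lemma not_occurs_list_incl {c L L'} : incl L L' -> ~ occurs_list c L' -> ~ occurs_list c L.
Proof. intros Hi Hc (B & HB & HcB); apply Hc; exists B; auto. Qed.

Lemma Permutation_cons_In {T} {l l' : list T} {x} : Permutation l (x :: l') -> In x l.
Proof. intros Hp; apply (Permutation_in _ (Permutation_sym Hp)), in_eq. Qed.

Lemma Permutation_cons_incl {T} {l l' : list T} {x} : Permutation l (x :: l') -> incl l' l.
Proof. intros Hp y Hy; apply (Permutation_in _ (Permutation_sym Hp)), in_cons, Hy. Qed.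

Lemma Cder_root P A Gam Del : Cder P A Gam Del -> P Gam Del.
Proof. destruct 1; assumption. Qed.

Definition maps_into (s : nat -> nat) (Gam Del : list formula) : Prop :=
  forall B, In B Gam -> In (rename s B) Del.

Lemma maps_into_cons s B Gam Del :
  maps_into s Gam Del -> maps_into s (B :: Gam) (rename s B :: Del).
Proof. intros H A [<- | HA]; [left | right; apply H]; auto. Qed.

Lemma maps_into_update s c c' Gam Del :
  maps_into s Gam Del -> ~ occurs_list c Gam -> maps_into (update s c c') Gam Del.
Proof.
  intros H Hc B HB; rewrite rename_update_notin; [apply H, HB | exact (not_occurs_list_In Hc HB)].
Qed.

Lemma IGder_contract_principal {G A s Gc P Gam Del F} :
  A RcontrL -> Permutation Gc (P :: Gam) -> maps_into s Gc Del ->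
  (forall L, maps_into s Gam (rename s P :: L) ->
             IGder G A (rename s P :: rename s P :: L) F) ->
  IGder G A Del F.
Proof.
  intros HA Hp Hmap H.
  destruct (in_split _ _ (Hmap P (Permutation_cons_In Hp))) as (l1 & l2 & ->).
  apply G_contrL with (B := rename s P) (Gam := l1 ++ l2); [exact HA | |].
  - apply Permutation_sym, Permutation_middle.
  - apply H; intros B HB.
    apply (Permutation_in _ (Permutation_sym (Permutation_middle _ _ _))).
    apply Hmap, (Permutation_cons_incl Hp), HB.
Qed.

Lemma IGder_rename_weaken G A Gam F : A RcontrL -> IGder G A Gam F ->
  forall s Del, maps_into s Gam Del -> IGder (rename s G) A Del (rename s F).
Proof.
  intros HcontrL H; induction H as
    [Gam F Hax | Gc F B Gam HA Hp Hd IH | Gam F HA Hd IH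
    | Gc F B D Gam HA Hp Hd IH | Gc F B D Gam HA Hp Hd IH
    | Gam B D HA Hd1 IH1 Hd2 IH2 | Gam B D HA Hd IH | Gam B D HA Hd IH
    | Gc F B D Gam HA Hp Hd1 IH1 Hd2 IH2 | Gam B D HA Hd IH
    | Gc F B t Gam HA Hp Hd IH | Gam B t HA Hd IH
    | Gc F B c Gam HA Hp HcGc HcF HcG Hd IH | Gam B c HA HcGam HcB HcG Hd IH
    | Gc F B D Del HA Hp Hd1 IH1 Hd2 IH2 | Del F HA Hd IH];
    intros s Del' Hmap; simpl.
  - destruct Hax as [[-> | []] | (B & HB & HBGam & [-> | []])]; [apply G_ax; left; left; auto|].
    apply G_ax; right; exists (rename s B); repeat split; [| apply Hmap, HBGam | left; auto].
    destruct HB as [-> | HB]; [left; reflexivity | right; apply rename_atomic, HB].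
  - apply IH; intros A0 HA0; apply Hmap, (Permutation_in _ (Permutation_sym Hp)).
    destruct HA0 as [<- | HA0]; simpl; auto.
  - apply G_botR; auto.
  - apply (IGder_contract_principal HcontrL Hp Hmap); intros L HL.
    eapply G_andL1; [exact HA | apply Permutation_refl | apply IH, maps_into_cons, HL].
  - apply (IGder_contract_principal HcontrL Hp Hmap); intros L HL.
    eapply G_andL2; [exact HA | apply Permutation_refl | apply IH, maps_into_cons, HL].
  - apply G_andR; auto.
  - apply G_orR1; auto.
  - apply G_orR2; auto.
  - apply (IGder_contract_principal HcontrL Hp Hmap); intros L HL.
    eapply G_impL; [exact HA | apply Permutation_refl | apply IH1, HL |].
    apply IH2, maps_into_cons, HL.
  - apply G_impR; [exact HA | apply IH, maps_into_cons, Hmap].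
  - apply (IGder_contract_principal HcontrL Hp Hmap); intros L HL.
    eapply G_allL; [exact HA | apply Permutation_refl |].
    rewrite <- rename_inst; apply IH, maps_into_cons, HL.
  - eapply G_exR; [exact HA | rewrite <- rename_inst; apply IH, Hmap].
  - apply (IGder_contract_principal HcontrL Hp Hmap); intros L HL.
    pose proof (not_occurs_list_In HcGc (Permutation_cons_In Hp)) as HcB.
    destruct (exists_fresh_const (rename s G) (rename s F)
                (rename s (Ex B) :: rename s (Ex B) :: L) []) as (c' & Hc'G & Hc'F & Hc' & _).
    eapply G_exL with (c := c'); [exact HA | apply Permutation_refl | exact Hc' | exact Hc'F
                                 | exact Hc'G |].
    rewrite <- (rename_update_notin s c c' G), <- (rename_update_notin s c c' F),
      <- (rename_update_inst s c c') by assumption.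
    apply IH, maps_into_cons, maps_into_update; [exact HL |].
    exact (not_occurs_list_incl (Permutation_cons_incl Hp) HcGc).
  - destruct (exists_fresh_const (rename s G) (rename s (All B)) Del' [])
      as (c' & Hc'G & Hc'B & Hc' & _).
    apply G_allR with (c := c'); [exact HA | exact Hc' | exact Hc'B | exact Hc'G |].
    rewrite <- (rename_update_notin s c c' G), <- (rename_update_inst s c c') by assumption.
    apply IH, maps_into_update; [exact Hmap | exact HcGam].
  - apply (IGder_contract_principal HcontrL Hp Hmap); intros L HL.
    eapply G_orLG; [exact HA | apply Permutation_refl | apply IH1, maps_into_cons, HL |].
    apply IH2, maps_into_cons, HL.
  - apply G_resG; auto.
Qed.

Lemma IGder_weaken {G A Gam Del F} :
  A RcontrL -> incl Gam Del -> IGder G A Gam F -> IGder G A Del F.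
Proof.
  intros HA Hi H; rewrite <- (rename_id G), <- (rename_id F).
  apply (IGder_rename_weaken G A Gam F HA H); intros B HB; rewrite rename_id; auto.
Qed.

Lemma IGder_absorb {G A Del P F} :
  A RcontrL -> In P Del -> IGder G A (P :: Del) F -> IGder G A Del F.
Proof.
  intros HA HP H; destruct (in_split _ _ HP) as (l1 & l2 & ->).
  apply G_contrL with (B := P) (Gam := l1 ++ l2);
    [exact HA | apply Permutation_sym, Permutation_middle |].
  refine (IGder_weaken HA _ H).
  apply incl_cons; [left; reflexivity |].
  intros B HB; right; exact (Permutation_in _ (Permutation_sym (Permutation_middle _ _ _)) HB).
Qed.

Section Translation.

Variable G : formula.

Notation IG := (IGder G no_allL_impR).

#[local] Hint Extern 1 (no_allL_impR _) => split; discriminate : core.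

Lemma no_allL_impR_contrL : no_allL_impR RcontrL.
Proof. auto. Qed.

(* G ⊃ ⊥ needs no image in the context, provided [s] fixes G: its ⊃-L then
   becomes res_G. *)
Definition related (s : nat -> nat) (Gam Del : list formula) : Prop :=
  forall B, In B Gam -> (B = Imp G Bot /\ rename s G = G) \/ In (rename s B) Del.

Definition avoids (X : list nat) (Del : list formula) : Prop :=
  forall c, In c X -> ~ occurs_list c Del.

Definition continues (X : list nat) (Del : list formula) (F : formula) : Prop :=
  forall Del', incl Del Del' -> avoids X Del' -> IG Del' F -> IG Del' G.

(* [s] renames the eigenvariables of the I-proof apart; [X] holds the
   eigenvariables of the ∀-R rules below, which the continuation reintroduces
   and which must therefore stay out of the context. *)
Definition translatable (Gam : list formula) (F : formula) : Prop :=
  forall s X Del, related s Gam Del -> avoids X Del -> continues X Del (rename s F) ->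
  IG Del (rename s F).

Lemma related_principal {s Gc P Gam Del} :
  related s Gc Del -> Permutation Gc (P :: Gam) -> P <> Imp G Bot -> In (rename s P) Del.
Proof. intros H Hp HPG; destruct (H P (Permutation_cons_In Hp)) as [[] |]; tauto. Qed.

Lemma related_incl {s Gam Gam' Del Del'} :
  related s Gam Del -> incl Gam' Gam -> incl Del Del' -> related s Gam' Del'.
Proof. intros H HGam HDel B HB; destruct (H B (HGam B HB)); auto. Qed.

Lemma related_cons s B Gam Del : related s Gam Del -> related s (B :: Gam) (rename s B :: Del).
Proof. intros H A [<- | HA]; [right; left; reflexivity | destruct (H A HA); simpl; auto]. Qed.

Lemma related_update {s c c' Gam Del} :
  related s Gam Del -> ~ occurs_list c Gam -> related (update s c c') Gam Del.
Proof.
  intros H Hc B HB; pose proof (not_occurs_list_In Hc HB) as HcB.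
  rewrite (rename_update_notin s c c' B HcB).
  destruct (H B HB) as [[-> HG] | HBDel]; [left | right]; auto.
  split; [reflexivity |].
  rewrite rename_update_notin; [exact HG | intros HcG; apply HcB; left; exact HcG].
Qed.

Lemma avoids_incl {X X' Del} : avoids X' Del -> incl X X' -> avoids X Del.
Proof. intros H HX c Hc; apply H, HX, Hc. Qed.

Lemma avoids_cons X B Del :
  avoids X Del -> (forall c, In c X -> ~ occurs c B) -> avoids X (B :: Del).
Proof.
  intros H HB c Hc (A & [<- | HA] & HcA); [exact (HB c Hc HcA) |].
  apply (H c Hc); exists A; auto.
Qed.

Lemma avoids_subformula {X B P Del} :
  avoids X Del -> In P Del -> (forall c, occurs c B -> occurs c P) -> avoids X (B :: Del).
Proof.
  intros H HP HBP; apply avoids_cons; [exact H |].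
  intros c Hc HcB; apply (H c Hc); exists P; auto.
Qed.

Lemma continues_incl {X Del Del' F} : continues X Del F -> incl Del Del' -> continues X Del' F.
Proof. intros H Hi Del'' Hi'; apply H; eapply incl_tran; eauto. Qed.

Lemma continues_step {X X' Del F1 F2} : incl X X' ->
  (forall Del', incl Del Del' -> avoids X' Del' -> IG Del' F1 -> IG Del' F2) ->
  continues X Del F2 -> continues X' Del F1.
Proof.
  intros HX Hstep H Del' Hi Ha H1; apply H; [exact Hi | exact (avoids_incl Ha HX) |].
  apply Hstep; assumption.
Qed.

Lemma translatable_left_premise {Gc Gam P E F s X Del} :
  Permutation Gc (P :: Gam) -> In (rename s P) Del ->
  (forall c, occurs c (rename s E) -> occurs c (rename s P)) ->
  related s Gc Del -> avoids X Del -> continues X Del (rename s F) ->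
  translatable (E :: Gam) F -> IG (rename s E :: Del) (rename s F).
Proof.
  intros Hp HP HEP Hrel Hav Hcont IH; apply (IH s X).
  - apply related_cons, (related_incl Hrel (Permutation_cons_incl Hp) (incl_refl _)).
  - exact (avoids_subformula Hav HP HEP).
  - exact (continues_incl Hcont (incl_tl _ (incl_refl _))).
Qed.

Lemma translatable_axiom {Gam F} : axiom Gam [F] -> translatable Gam F.
Proof.
  intros Hax s X Del Hrel _ _.
  destruct Hax as [[-> | []] | (B & HB & HBGam & [-> | []])];
    [apply G_ax; left; left; reflexivity |].
  destruct (Hrel B HBGam) as [[-> _] | HBDel]; [destruct HB as [HB | []]; discriminate |].
  apply G_ax; right; exists (rename s B); repeat split; [| exact HBDel | left; reflexivity].
  destruct HB as [-> | HB]; [left; reflexivity | right; apply rename_atomic, HB].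
Qed.

Lemma translatable_contrL {Gc Gam B F} :
  Permutation Gc (B :: Gam) -> translatable (B :: B :: Gam) F -> translatable Gc F.
Proof.
  intros Hp IH s X Del Hrel Hav Hcont; apply (IH s X); [| exact Hav | exact Hcont].
  apply (related_incl Hrel); [| apply incl_refl].
  intros A [<- | HA];
    [exact (Permutation_cons_In Hp) | exact (Permutation_in _ (Permutation_sym Hp) HA)].
Qed.

Lemma translatable_botR {Gam F} : translatable Gam Bot -> translatable Gam F.
Proof.
  intros IH s X Del Hrel Hav Hcont.
  assert (Hstep : forall Del', incl Del Del' -> avoids X Del' ->
                               IG Del' Bot -> IG Del' (rename s F))
    by (intros; apply G_botR; auto).
  apply Hstep; [apply incl_refl | exact Hav |].
  exact (IH s X Del Hrel Hav (continues_step (incl_refl _) Hstep Hcont)).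
Qed.

Lemma translatable_andL1 {Gc Gam B D F} :
  Permutation Gc (And B D :: Gam) -> translatable (B :: Gam) F -> translatable Gc F.
Proof.
  intros Hp IH s X Del Hrel Hav Hcont.
  assert (HP := related_principal Hrel Hp ltac:(discriminate)).
  apply (IGder_absorb no_allL_impR_contrL HP).
  eapply G_andL1; [auto | apply Permutation_refl |].
  exact (translatable_left_premise Hp HP (fun c Hc => or_introl Hc) Hrel Hav Hcont IH).
Qed.

Lemma translatable_andL2 {Gc Gam B D F} :
  Permutation Gc (And B D :: Gam) -> translatable (D :: Gam) F -> translatable Gc F.
Proof.
  intros Hp IH s X Del Hrel Hav Hcont.
  assert (HP := related_principal Hrel Hp ltac:(discriminate)).
  apply (IGder_absorb no_allL_impR_contrL HP).
  eapply G_andL2; [auto | apply Permutation_refl |].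
  exact (translatable_left_premise Hp HP (fun c Hc => or_intror Hc) Hrel Hav Hcont IH).
Qed.

Lemma translatable_orL {Gc Gam B D F} : Permutation Gc (Or B D :: Gam) ->
  translatable (B :: Gam) F -> translatable (D :: Gam) F -> translatable Gc F.
Proof.
  intros Hp IHB IHD s X Del Hrel Hav Hcont.
  assert (HP := related_principal Hrel Hp ltac:(discriminate)).
  assert (HDP : forall c, occurs c (rename s D) -> occurs c (rename s (Or B D)))
    by (intros c Hc; right; exact Hc).
  apply (IGder_absorb no_allL_impR_contrL HP).
  eapply G_orLG; [auto | apply Permutation_refl | |].
  - exact (translatable_left_premise Hp HP (fun c Hc => or_introl Hc) Hrel Hav Hcont IHB).
  - apply Hcont; [apply incl_tl, incl_refl | exact (avoids_subformula Hav HP HDP) |].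
    exact (translatable_left_premise Hp HP HDP Hrel Hav Hcont IHD).
Qed.

Lemma translatable_andR {Gam B D} :
  translatable Gam B -> translatable Gam D -> translatable Gam (And B D).
Proof.
  intros IHB IHD s X Del Hrel Hav Hcont; simpl in Hcont |- *.
  assert (HDofB : forall Del', incl Del Del' -> avoids X Del' ->
                               IG Del' (rename s B) -> IG Del' (rename s D)).
  { intros Del' Hi Ha HB.
    apply (IHD s X Del' (related_incl Hrel (incl_refl _) Hi) Ha).
    eapply (continues_step (incl_refl _)); [| exact (continues_incl Hcont Hi)].
    intros Del'' Hi' _ HD; apply G_andR; [auto | | exact HD].
    exact (IGder_weaken no_allL_impR_contrL Hi' HB). }
  assert (HB : IG Del (rename s B)).
  { apply (IHB s X Del Hrel Hav); eapply (continues_step (incl_refl _)); [| exact Hcont].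
    intros Del' Hi Ha HB; apply G_andR; [auto | exact HB | exact (HDofB Del' Hi Ha HB)]. }
  apply G_andR; [auto | exact HB | exact (HDofB Del (incl_refl _) Hav HB)].
Qed.

Lemma translatable_orR1 {Gam B D} : translatable Gam B -> translatable Gam (Or B D).
Proof.
  intros IH s X Del Hrel Hav Hcont; simpl in Hcont |- *.
  apply G_orR1; [auto |]; apply (IH s X Del Hrel Hav).
  eapply (continues_step (incl_refl _)); [| exact Hcont].
  intros; apply G_orR1; auto.
Qed.

Lemma translatable_orR2 {Gam B D} : translatable Gam D -> translatable Gam (Or B D).
Proof.
  intros IH s X Del Hrel Hav Hcont; simpl in Hcont |- *.
  apply G_orR2; [auto |]; apply (IH s X Del Hrel Hav).
  eapply (continues_step (incl_refl _)); [| exact Hcont].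
  intros; apply G_orR2; auto.
Qed.

Lemma translatable_exR {Gam B t} : translatable Gam (inst B t) -> translatable Gam (Ex B).
Proof.
  intros IH s X Del Hrel Hav Hcont; simpl in Hcont |- *.
  apply G_exR with (t := rename_term s t); [auto |]; rewrite <- rename_inst.
  apply (IH s X Del Hrel Hav); eapply (continues_step (incl_refl _)); [| exact Hcont].
  intros Del' _ _ H; apply G_exR with (t := rename_term s t); [auto |].
  rewrite <- rename_inst; exact H.
Qed.

Lemma translatable_impL {Gc Gam B D F} : Permutation Gc (Imp B D :: Gam) ->
  translatable Gam B -> translatable (D :: Gam) F -> translatable Gc F.
Proof.
  intros Hp IHB IHD s X Del Hrel Hav Hcont.
  assert (Hrel' := related_incl Hrel (Permutation_cons_incl Hp) (incl_refl _)).
  destruct (Hrel _ (Permutation_cons_In Hp)) as [[HBD HG] | HP].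
  - injection HBD as -> ->; apply G_resG; [auto |].
    specialize (IHB s X Del Hrel' Hav); rewrite HG in IHB.
    apply IHB; intros Del' _ _ H; exact H.
  - assert (Hright : forall Del', incl Del Del' -> avoids X Del' ->
                                  IG (rename s D :: Del') (rename s F)).
    { intros Del' Hi Ha.
      exact (translatable_left_premise Hp (Hi _ HP) (fun c Hc => or_intror Hc)
               (related_incl Hrel (incl_refl _) Hi) Ha (continues_incl Hcont Hi) IHD). }
    assert (Hstep : forall Del', incl Del Del' -> avoids X Del' ->
                                 IG Del' (rename s B) -> IG Del' (rename s F)).
    { intros Del' Hi Ha HB.
      apply (IGder_absorb no_allL_impR_contrL (Hi _ HP)).
      eapply G_impL; [auto | apply Permutation_refl | exact HB | exact (Hright Del' Hi Ha)]. }
    apply Hstep; [apply incl_refl | exact Hav |].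
    exact (IHB s X Del Hrel' Hav (continues_step (incl_refl _) Hstep Hcont)).
Qed.

Lemma translatable_exL {Gc Gam B c F} : Permutation Gc (Ex B :: Gam) ->
  ~ occurs_list c Gc -> ~ occurs_list c [F] ->
  translatable (inst B (TConst c) :: Gam) F -> translatable Gc F.
Proof.
  intros Hp HcGc HcF IH s X Del Hrel Hav Hcont.
  apply (fun H => not_occurs_list_In H (in_eq _ _)) in HcF.
  assert (HcB := not_occurs_list_In HcGc (Permutation_cons_In Hp)).
  assert (HP := related_principal Hrel Hp ltac:(discriminate)).
  destruct (exists_fresh_const G (rename s F) Del X) as (c' & Hc'G & Hc'F & Hc'Del & Hc'X).
  apply (IGder_absorb no_allL_impR_contrL HP).
  apply G_exL with (B := rename s B) (c := c') (Gam := Del);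
    [auto | apply Permutation_refl | | exact Hc'F | exact Hc'G |].
  - exact (not_occurs_list_incl (incl_cons HP (incl_refl _)) Hc'Del).
  - rewrite <- (rename_update_inst s c c' B HcB), <- (rename_update_notin s c c' F HcF).
    apply (IH (update s c c') X).
    + apply related_cons, related_update.
      * exact (related_incl Hrel (Permutation_cons_incl Hp) (incl_refl _)).
      * exact (not_occurs_list_incl (Permutation_cons_incl Hp) HcGc).
    + rewrite (rename_update_inst s c c' B HcB); apply avoids_cons; [exact Hav |].
      intros c0 Hc0 Hocc; apply occurs_fsubst in Hocc as [Hocc | Hocc].
      * apply (Hav c0 Hc0); exists (Ex (rename s B)); auto.
      * simpl in Hocc; subst; contradiction.
    + rewrite (rename_update_notin s c c' F HcF).
      exact (continues_incl Hcont (incl_tl _ (incl_refl _))).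
Qed.

Lemma translatable_allR {Gam B c} : ~ occurs_list c Gam -> ~ occurs_list c [All B] ->
  translatable Gam (inst B (TConst c)) -> translatable Gam (All B).
Proof.
  intros HcGam HcB IH s X Del Hrel Hav Hcont; simpl in Hcont |- *.
  apply (fun H => not_occurs_list_In H (in_eq _ _)) in HcB.
  destruct (exists_fresh_const G (All (rename s B)) Del X) as (c' & Hc'G & Hc'B & Hc'Del & _).
  assert (Hav' : avoids (c' :: X) Del)
    by (intros c0 [<- | Hc0]; [exact Hc'Del | exact (Hav c0 Hc0)]).
  assert (Hstep : forall Del', incl Del Del' -> avoids (c' :: X) Del' ->
                    IG Del' (inst (rename s B) (TConst c')) -> IG Del' (All (rename s B))).
  { intros Del' _ Ha H; apply G_allR with (c := c');
      [auto | exact (Ha c' (in_eq _ _)) | exact Hc'B | exact Hc'G | exact H]. }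
  apply Hstep; [apply incl_refl | exact Hav' |].
  rewrite <- (rename_update_inst s c c' B HcB).
  apply (IH (update s c c') (c' :: X) Del (related_update Hrel HcGam) Hav').
  rewrite (rename_update_inst s c c' B HcB).
  exact (continues_step (incl_tl _ (incl_refl _)) Hstep Hcont).
Qed.

Lemma Iproof_translatable Gam Dc : Cder single_succ no_allL_impR Gam Dc ->
  forall F, Dc = [F] -> translatable Gam F.
Proof.
  induction 1 as
    [Gam Del HP Hax | Gc Del B Gam HP HA Hp Hd IH | Gam Dc B Del HP HA Hp Hd IH
    | Gam Dc B Del HP HA Hp Hd IH | Gc Del B D Gam HP HA Hp Hd IH | Gc Del B D Gam HP HA Hp Hd IH
    | Gc Del B D Gam HP HA Hp Hd1 IH1 Hd2 IH2 | Gam Dc B D Del HP HA Hp Hd1 IH1 Hd2 IH2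
    | Gam Dc B D Del HP HA Hp Hd IH | Gam Dc B D Del HP HA Hp Hd IH
    | Gc Dc B D Gam Del The HP HA Hp1 Hp2 Hd1 IH1 Hd2 IH2 | Gam Dc B D Del HP HA Hp Hd IH
    | Gc Del B t Gam HP HA Hp Hd IH | Gam Dc B t Del HP HA Hp Hd IH
    | Gc Del B c Gam HP HA Hp HcGc HcDel Hd IH | Gam Dc B c Del HP HA Hp HcGam HcDc Hd IH];
    intros F ->;
    try (apply Permutation_length_1_inv in Hp; injection Hp as <- ->).
  - exact (translatable_axiom Hax).
  - exact (translatable_contrL Hp (IH F eq_refl)).
  - apply Cder_root in Hd; discriminate Hd.
  - exact (translatable_botR (IH Bot eq_refl)).
  - exact (translatable_andL1 Hp (IH F eq_refl)).
  - exact (translatable_andL2 Hp (IH F eq_refl)).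
  - exact (translatable_orL Hp (IH1 F eq_refl) (IH2 F eq_refl)).
  - exact (translatable_andR (IH1 B eq_refl) (IH2 D eq_refl)).
  - exact (translatable_orR1 (IH B eq_refl)).
  - exact (translatable_orR2 (IH D eq_refl)).
  - apply Cder_root in Hd1; destruct Del; [| discriminate Hd1].
    apply Permutation_length_1_inv in Hp2; simpl in Hp2; subst The.
    exact (translatable_impL Hp1 (IH1 B eq_refl) (IH2 F eq_refl)).
  - destruct HA as [_ []]; reflexivity.
  - destruct HA as [[] _]; reflexivity.
  - exact (translatable_exR (IH _ eq_refl)).
  - exact (translatable_exL Hp HcGc HcDel (IH F eq_refl)).
  - exact (translatable_allR HcGam HcDc (IH _ eq_refl)).
Qed.

End Translation.

Theorem lemma4 (Gam : list formula) (G : formula) :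
  Iproof no_allL_impR (Imp G Bot :: Gam) G ->
  IGder G no_allL_impR Gam G.
Proof.
  intros Hproof.
  assert (Htr := Iproof_translatable G _ _ Hproof G eq_refl (fun c => c) [] Gam).
  rewrite rename_id in Htr; apply Htr.
  - intros B [<- | HB]; [left; split; [reflexivity | apply rename_id] |].
    right; rewrite rename_id; exact HB.
  - intros c [].
  - intros Del' _ _ HG; exact HG.
Qed.
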